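(* Let $n\ge3$ and $k\ge0$ be integers with $n\le k$. If $S\subseteq\mathrm{Inc}(A,B)$ is an independent set in $G_n^k$ that is not reversible, then \[|S|\le \frac{(k+1)(k+2)}{2}+2-n.\]
   Context: For integers $n\ge3$, $k\ge0$, the crown $S_n^k$ is the poset with ground set $A\cup B$, $A=\{a_1,\dots,a_{n+k}\}$, $B=\{b_1,\dots,b_{n+k}\}$, indices cyclic modulo $n+k$; elements of $A$ are pairwise incomparable, as are elements of $B$, and $a_i$ is incomparable to $b_j$ when $j\in\{i,i+1,\dots,i+k\}$ (mod $n+k$), while $a_i<b_j$ otherwise. $\mathrm{Inc}(A,B)$ is the set of pairs $(a,b)\in A\times B$ with $a$ incomparable to $b$. The graph $G_n^k$ has vertex set $\mathrm{Inc}(A,B)$, with $(a,b)$ adjacent to $(x,y)$ iff $a<y$ and $x<b$ in $S_n^k$. A set $R\subseteq\mathrm{Inc}(A,B)$ is reversible if there is a linear extension $L$ of $S_n^k$ with $b<a$ in $L$ for all $(a,b)\in R$. *)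

From mathcomp Require Import all_boot.
Set Implicit Arguments. Unset Strict Implicit. Unset Printing Implicit Defensive.

(* Crown S_n^k: ground set A + B, with a_i = inl i, b_j = inr j, i, j : 'I_(n+k).
   a_i is incomparable to b_j iff j - i (mod n+k) lies in {0,...,k}. *)
Definition crown_elt (n k : nat) : finType := ('I_(n + k) + 'I_(n + k))%type.

Definition cdiff (m : nat) (i j : 'I_m) : nat := (j + m - i) %% m.

Definition inc_ab (n k : nat) (i j : 'I_(n + k)) : bool := cdiff i j <= k.

Definition crown_lt (n k : nat) (x y : crown_elt n k) : bool :=
  match x, y with
  | inl i, inr j => ~~ inc_ab i j
  | _, _ => false
  end.

Definition crown_le (n k : nat) (x y : crown_elt n k) : bool :=
  (x == y) || crown_lt x y.

(* Inc(A,B), as index pairs (i, j) standing for (a_i, b_j) *)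
Definition IncAB (n k : nat) : {set 'I_(n + k) * 'I_(n + k)} :=
  [set p | inc_ab p.1 p.2].

Definition Gadj (n k : nat) (u v : 'I_(n + k) * 'I_(n + k)) : bool :=
  crown_lt (inl u.1 : crown_elt n k) (inr v.2) &&
  crown_lt (inl v.1 : crown_elt n k) (inr u.2).

Definition independent (n k : nat) (S : {set 'I_(n + k) * 'I_(n + k)}) : Prop :=
  S \subset IncAB n k /\ forall u v, u \in S -> v \in S -> ~~ Gadj u v.

Definition linear_order (T : finType) (L : rel T) : Prop :=
  [/\ reflexive L, antisymmetric L, transitive L & total L].

Definition linear_extension (n k : nat) (L : rel (crown_elt n k)) : Prop :=
  linear_order L /\ forall x y, crown_le x y -> L x y.

Definition reversible (n k : nat) (R : {set 'I_(n + k) * 'I_(n + k)}) : Prop :=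
  exists L : rel (crown_elt n k), linear_extension L /\
    forall p, p \in R ->
      L (inr p.2) (inl p.1) && (inr p.2 != inl p.1 :> crown_elt n k).

From mathcomp Require Import all_boot zify.
Set Implicit Arguments. Unset Strict Implicit. Unset Printing Implicit Defensive.

(* If [S] is not reversible, the digraph on [B] with an arc [j -> y] whenever
   some [(a_x, b_j)] in [S] has [a_x < b_y] (reversing [S] then forces
   [b_j < a_x < b_y]) has a cycle; fix a smallest set [C] in which every vertex
   has an out-neighbour. Let [V] be the set of [b_j] met by [S], and [p = |V|].
   Measured by distance to [j], the out-neighbourhood of [j] is the sumset of
   the partners of [j] with an interval of length [n - 1], so it has at least
   [|partners j| + n - 2] elements, and [n - 2] more unless it is an interval.
   Independence of [S] makes arcs asymmetric, so at most [p(p-1)/2] arcs join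
   vertices of [V] and at most [p] enter each of the other [n + k - p] vertices;
   when all out-neighbourhoods of vertices of [C] are intervals, minimality of
   [C] shows that every vertex misses an arc from [C]. Summing over [V] and
   maximising the resulting quadratic in [p] gives the bound in both cases. *)

Section CyclicDistance.
Variable m : nat.
Implicit Types a b c : 'I_m.

Lemma cdiffE a b : cdiff a b = if a <= b then b - a else b + m - a.
Proof.
rewrite /cdiff; case: leqP => ab.
  have -> : b + m - a = (b - a) + m by lia.
  by rewrite modnDr modn_small //; have := ltn_ord b; lia.
by rewrite modn_small //; have := ltn_ord a; have := ltn_ord b; lia.
Qed.

Lemma cdiff_lt a b : cdiff a b < m.
Proof.
by rewrite cdiffE; have := ltn_ord a; have := ltn_ord b; case: (leqP a b); lia.
Qed.

Lemma cdiff_add a b c :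
  cdiff a b + cdiff b c = cdiff a c \/ cdiff a b + cdiff b c = cdiff a c + m.
Proof.
rewrite !cdiffE; have := ltn_ord a; have := ltn_ord b; have := ltn_ord c.
by case: (leqP a b); case: (leqP b c); case: (leqP a c); lia.
Qed.

Lemma cdiff_eq0 a b : cdiff a b = 0 -> a = b.
Proof.
rewrite cdiffE; have := ltn_ord a; have := ltn_ord b.
by case: (leqP a b) => ab ? ? ?; apply: val_inj => /=; lia.
Qed.

Lemma cdiff_injl a b c : cdiff a c = cdiff b c -> a = b.
Proof.
by move=> e; apply: cdiff_eq0; have := cdiff_add a b c; have := cdiff_lt a b; lia.
Qed.

Lemma cdiff_injr a b c : cdiff c a = cdiff c b -> a = b.
Proof.
by move=> e; apply: cdiff_eq0; have := cdiff_add c a b; have := cdiff_lt a b; lia.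
Qed.

Lemma cdiff_surj b (d : 'I_m) : exists a, cdiff a b = d.
Proof.
have := ltn_ord b; have := ltn_ord d; case: (leqP d b) => db ? ?.
  have lt_m : b - d < m by lia.
  by exists (Ordinal lt_m); rewrite cdiffE /=; case: leqP => ?; lia.
have lt_m : b + m - d < m by lia.
by exists (Ordinal lt_m); rewrite cdiffE /=; case: leqP => ?; lia.
Qed.

End CyclicDistance.

Lemma card_interval (m lo hi : nat) :
  hi <= m -> #|[set d : 'I_m | lo <= d < hi]| = hi - lo.
Proof.
elim: hi => [|hi IH] hi_m.
  by apply/eqP; rewrite cards_eq0; apply/eqP/setP => d; rewrite !inE ltn0 andbF.
have [lo_hi | hi_lo] := leqP lo hi.
  rewrite (_ : [set d : 'I_m | lo <= d < hi.+1] =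
               Ordinal hi_m |: [set d : 'I_m | lo <= d < hi]).
    by rewrite cardsU1 IH ?(ltnW hi_m) // !inE /= ltnn andbF; lia.
  by apply/setP => d; rewrite !inE -val_eqE /=; lia.
have -> : [set d : 'I_m | lo <= d < hi.+1] = set0.
  by apply/setP => d; rewrite !inE; apply/negbTE; rewrite negb_and; lia.
by rewrite cards0; lia.
Qed.

Lemma card_setU_disjoint (T : finType) (A B : {set T}) :
  [disjoint A & B] -> #|A :|: B| = #|A| + #|B|.
Proof. by move=> dAB; apply/eqP; rewrite (leq_card_setU A B).2. Qed.

Section Sumset.
Variables m n : nat.
Hypothesis n_gt1 : 1 < n.
Implicit Types O : {set 'I_m}.

Definition sumset O : {set 'I_m} := [set d : 'I_m | [exists o in O, o < d < o + n]].

Lemma sumsetS O1 O2 : O1 \subset O2 -> sumset O1 \subset sumset O2.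
Proof.
move=> /subsetP O12; apply/subsetP => d; rewrite !inE => /exists_inP [o oO od].
by apply/exists_inP; exists o; first exact: O12.
Qed.

(* [O + 1] and the [n - 2] elements above [max O + 1] all lie in the sumset. *)
Lemma card_sumset O : O != set0 -> {in O, forall o : 'I_m, o + n <= m} ->
  #|O| + (n - 2) <= #|sumset O|.
Proof.
move=> /set0Pn [o0 o0O] Obound.
have [om omO omax] := arg_maxnP (fun o : 'I_m => val o) o0O.
have {}omax o : o \in O -> o <= om by move/omax.
pose succ (o : 'I_m) : 'I_m := insubd o o.+1.
have succE o : o \in O -> val (succ o) = o.+1.
  by move=> oO; rewrite val_insubd; have := Obound o oO; case: ifP => // /negbT; lia.
pose top := [set d : 'I_m | om + 2 <= d < om + n].
have card_succ : #|succ @: O| = #|O|.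
  apply: card_in_imset => o1 o2 o1O o2O e; apply: val_inj => /=.
  by have := succE _ o1O; have := succE _ o2O; rewrite e; lia.
have card_top : #|top| = n - 2 by rewrite card_interval ?Obound //; lia.
have disj : [disjoint succ @: O & top].
  rewrite disjoints_subset; apply/subsetP => _ /imsetP [o oO ->].
  by rewrite !inE succE //; have := omax o oO; lia.
have sub : succ @: O :|: top \subset sumset O.
  rewrite subUset; apply/andP; split; apply/subsetP => d.
    case/imsetP => o oO ->; rewrite inE; apply/exists_inP; exists o => //.
    by rewrite succE //; lia.
  by rewrite !inE => d_top; apply/exists_inP; exists om => //; lia.
by have := subset_leq_card sub; rewrite card_setU_disjoint // card_succ card_top.
Qed.

(* A gap splits [O] into two parts with disjoint sumsets. *)
Lemma card_sumset_gap O d1 d2 d3 : {in O, forall o : 'I_m, o + n <= m} ->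
  d1 \in sumset O -> d3 \in sumset O -> d2 \notin sumset O -> d1 <= d2 <= d3 ->
  #|O| + 2 * (n - 2) <= #|sumset O|.
Proof.
move=> Obound s1 s3 ns2 /andP [le12 le23].
have far o : o \in O -> o < d2 -> o + n <= d2.
  move=> oO od2; move: ns2; rewrite inE negb_exists => /forallP /(_ o).
  by rewrite oO /= negb_and -!leqNgt; lia.
pose low := O :&: [set o : 'I_m | o < d2]; pose high := O :\: [set o : 'I_m | o < d2].
have low0 : low != set0.
  move: s1; rewrite inE => /exists_inP [o oO od1].
  by apply/set0Pn; exists o; rewrite !inE oO; lia.
have high0 : high != set0.
  move: s3; rewrite inE => /exists_inP [o oO od3].
  apply/set0Pn; exists o; rewrite !inE oO andbT -leqNgt.
  by case: ltnP => // /(far o oO); lia.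
have disj : [disjoint sumset low & sumset high].
  rewrite disjoints_subset; apply/subsetP => d; rewrite !inE.
  case/exists_inP => o; rewrite !inE => /andP [oO od2] od.
  apply/exists_inP => -[o' ]; rewrite !inE -leqNgt => /andP [d2o' _].
  by have := far o oO od2; lia.
have low_bound : {in low, forall o : 'I_m, o + n <= m}.
  by move=> o; rewrite inE => /andP [/Obound].
have high_bound : {in high, forall o : 'I_m, o + n <= m}.
  by move=> o; rewrite inE => /andP [_ /Obound].
apply: (@leq_trans (#|sumset low| + #|sumset high|)).
  rewrite -(cardsID [set o : 'I_m | o < d2] O) -/low -/high.
  by rewrite mul2n -addnn addnACA leq_add ?card_sumset.
rewrite -card_setU_disjoint //; apply: subset_leq_card.
by rewrite subUset !sumsetS // ?subsetIl ?subsetDl.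
Qed.

End Sumset.

Section Counting.
Variable U : finType.
Implicit Types A : {set U}.

Lemma card_sum_mem A : #|A| = \sum_x (x \in A).
Proof. by rewrite -sum1_card big_mkcond; apply: eq_bigr => x _; case: (x \in A). Qed.

Lemma sum_bool_le_card A (f : pred U) : \sum_(x in A) f x <= #|A|.
Proof. by rewrite -sum1_card; apply: leq_sum => x _; case: (f x). Qed.

Lemma sum_bool_le_cardD1 A (f : pred U) x0 :
  x0 \in A -> ~~ f x0 -> \sum_(x in A) f x <= #|A| - 1.
Proof.
move=> Ax0 nfx0; rewrite (bigD1 x0) //= (negbTE nfx0) (cardsD1 x0) Ax0 add1n subn1 /=.
apply: (@leq_trans (\sum_(x in A | x != x0) 1)).
  by apply: leq_sum => x _; case: (f x).
by rewrite sum1dep_card subset_leq_card //; apply/subsetP => x; rewrite !inE andbC.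
Qed.

Lemma sum_asym_le A (r : rel U) :
  irreflexive r -> (forall x y, r x y -> r y x -> False) ->
  2 * \sum_(x in A) \sum_(y in A) r x y <= #|A| * (#|A| - 1).
Proof.
move=> irr asym; rewrite mul2n -addnn {2}exchange_big -big_split /= -sum_nat_const.
apply: leq_sum => x xA; rewrite -big_split /=.
apply: leq_trans (sum_bool_le_cardD1 (f := fun y => r x y || r y x) xA _); last first.
  by rewrite /= irr.
apply: leq_sum => y _; case: (boolP (r x y)) => [rxy|]; case: (boolP (r y x)) => // ryx.
by case: (asym _ _ rxy ryx).
Qed.

End Counting.

Lemma acyclic_linear_order (U : finType) (e : rel U) :
  (forall u v, e u v -> ~~ connect e v u) ->
  exists L : rel U, linear_order L /\ forall u v, e u v -> L u v && (u != v).
Proof.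
move=> acyclic.
pose rank u := #|[set w | connect e w u]|.
have rank_lt u v : e u v -> rank u < rank v.
  move=> euv; apply: proper_card; rewrite properE; apply/andP; split.
    by apply/subsetP => w; rewrite !inE => /connect_trans; apply; apply: connect1.
  by apply/subsetPn; exists v; rewrite !inE ?connect0 ?acyclic.
pose key u := rank u * #|U| + enum_rank u.
have key_lt u v : e u v -> key u < key v.
  move=> /rank_lt lt_uv; have : enum_rank u < #|U| := ltn_ord _.
  by have := leq_mul lt_uv (leqnn #|U|); rewrite mulSn /key; lia.
have key_inj : injective key.
  move=> u v /(congr1 (modn^~ #|U|)); rewrite /key !modnMDl !modn_small //.
  by move=> /val_inj/enum_rank_inj.
exists (fun u v => key u <= key v); split.
  split=> [u|u v|v u w|u v]; [exact: leqnn | | exact: leq_trans | exact: leq_total].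
  by rewrite -eqn_leq => /eqP/key_inj.
move=> u v /key_lt lt_uv; rewrite ltnW //=; apply: contraTneq lt_uv => ->.
by rewrite ltnn.
Qed.

Lemma double_bound_nonconvex (n k s p q : nat) : p + q = n + k ->
  2 * (s + (n - 2) * p + (n - 2)) <= p * (p - 1) + 2 * (q * p) ->
  2 * (s + (n - 2)) <= k.+1 * k.+2.
Proof.
move=> pq bound; have q_eq : q = n + k - p by lia.
by subst q; case: (leqP p k.+1) => p_k; nia.
Qed.

Lemma double_bound_convex (n k s p q : nat) : p + q = n + k -> 0 < p ->
  2 * (s + (n - 2) * p) <= p * (p - 1) + 2 * (q * (p - 1)) ->
  2 * (s + (n - 2)) <= k.+1 * k.+2.
Proof.
move=> pq p_gt0 bound; have q_eq : q = n + k - p by lia.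
by subst q; case: (leqP p k.+2) => p_k; nia.
Qed.

Lemma leq_half_triangular (n k s : nat) :
  2 * (s + (n - 2)) <= k.+1 * k.+2 -> s <= (k.+1 * k.+2) %/ 2 + 2 - n.
Proof.
have even : 2 %| k.+1 * k.+2 by rewrite dvdn2 oddM /= negbK; case: (odd k).
by rewrite -(divnK even); move: (_ %/ 2) => t; lia.
Qed.

Section CrownArcs.
Variables (n k : nat) (S : {set 'I_(n + k) * 'I_(n + k)}).
Hypothesis S_inc : S \subset IncAB n k.
Hypothesis S_indep : forall u v, u \in S -> v \in S -> ~~ Gadj u v.
Local Notation T := 'I_(n + k).

Definition arc (j y : T) : bool := [exists x, ((x, j) \in S) && ~~ @inc_ab n k x y].
Definition partners (j : T) : {set T} := [set x | (x, j) \in S].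
Definition outs (j : T) : {set T} := [set y | arc j y].
Definition supp : {set T} := [set j | partners j != set0].

Definition convex (j : T) : bool := [forall u, forall v, forall w,
  arc j u ==> arc j w ==> (cdiff u j <= cdiff v j <= cdiff w j) ==> arc j v].

Definition cyclic (C : {set T}) : bool :=
  (C != set0) && [forall j in C, [exists y in C, arc j y]].

Lemma partner_cdiff x j : (x, j) \in S -> cdiff x j <= k.
Proof. by move/(subsetP S_inc); rewrite inE. Qed.

Lemma arc_irr : irreflexive arc.
Proof.
move=> j; apply/existsP => -[x /andP [xj]]; rewrite /inc_ab.
by have := partner_cdiff xj; rewrite leqNgt => ->.
Qed.

Lemma arc_asym j y : arc j y -> arc y j -> False.
Proof.
move=> /existsP [x /andP [xj xy]] /existsP [x' /andP [x'y x'j]].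
by have := S_indep xj x'y; rewrite /Gadj /crown_lt /= xy x'j.
Qed.

Lemma arc_supp j y : arc j y -> j \in supp.
Proof.
by case/existsP => x /andP [xj _]; rewrite inE; apply/set0Pn; exists x; rewrite inE.
Qed.

Lemma cyclic_sub_supp C : cyclic C -> C \subset supp.
Proof.
by case/andP => _ /forall_inP Carc; apply/subsetP => j /Carc /exists_inP [y _ /arc_supp].
Qed.

Lemma convexP j u v w : convex j -> arc j u -> arc j w ->
  cdiff u j <= cdiff v j <= cdiff w j -> arc j v.
Proof.
move=> /forallP /(_ u) /forallP /(_ v) /forallP /(_ w).
by move=> /implyP conv /conv /implyP conv' /conv' /implyP.
Qed.

Lemma convex_no_arc_after j z y1 y2 : convex j -> arc j z -> ~~ arc j y1 ->
  cdiff z j < cdiff z y2 <= cdiff z y1 -> ~~ arc j y2.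
Proof.
move=> cj jz jy1 order; apply: contra jy1 => jy2; apply: (convexP cj jz jy2).
have := cdiff_add z y1 j; have := cdiff_add z y2 j; have := cdiff_lt z y1.
by have := cdiff_lt z y2; have := cdiff_lt y1 j; have := cdiff_lt y2 j; lia.
Qed.

Lemma convex_no_arc_before j z y1 y2 : convex j -> arc j z -> ~~ arc j y1 ->
  0 < cdiff z y1 <= cdiff z y2 -> cdiff z y2 <= cdiff z j -> ~~ arc j y2.
Proof.
move=> cj jz jy1 order order'; apply: contra jy1 => jy2; apply: (convexP cj jy2 jz).
have := cdiff_add z y1 j; have := cdiff_add z y2 j; have := cdiff_lt z y1.
by have := cdiff_lt z y2; have := cdiff_lt y1 j; have := cdiff_lt y2 j; lia.
Qed.

Section ClosestVertex.
Variables (C : {set T}) (z a : T).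
Hypothesis C_convex : {in C, forall j, convex j}.
Hypothesis C_to_z : {in C, forall j, arc j z}.
Hypothesis aC : a \in C.
Hypothesis a_closest : {in C, forall i, cdiff z a <= cdiff z i}.

(* If [arc a w'] failed, convexity at [a] would put [w'] between [a] and [w] (going
   round from [z]), where convexity at [w] forbids [arc w w']. *)
Lemma arc_from_closest w w' : w \in C -> w' \in C -> arc a w -> arc w w' -> arc a w'.
Proof.
move=> wC w'C aw ww'; apply: contraTT ww' => naw'.
have a_w : cdiff z a < cdiff z w.
  rewrite ltn_neqAle a_closest // andbT; apply: contraTneq aw => /cdiff_injr <-.
  by rewrite arc_irr.
have w'_w : cdiff z w' < cdiff z w.
  rewrite ltnNge; apply: contraTN aw => w_w'.
  by apply: convex_no_arc_after (C_convex aC) (C_to_z aC) naw' _; rewrite a_w.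
have z_a : 0 < cdiff z a.
  rewrite lt0n; apply: contraTneq (C_to_z aC) => /cdiff_eq0 <-; by rewrite arc_irr.
apply: convex_no_arc_before (C_convex wC) (C_to_z wC) _ _ (ltnW w'_w).
  by apply/negP => /(arc_asym aw).
by rewrite z_a a_closest.
Qed.

End ClosestVertex.

(* If every vertex of [C] had an arc to [z], the out-neighbours in [C] of the vertex
   of [C] closest after [z] would form a smaller cyclic set. *)
Lemma minimal_cyclic_misses C z : cyclic C ->
  (forall C', cyclic C' -> #|C| <= #|C'|) -> {in C, forall j, convex j} ->
  exists2 j, j \in C & ~~ arc j z.
Proof.
move=> cC minC C_convex; apply/exists_inP; apply: contraT; rewrite negb_exists_in.
move=> /forall_inP C_to_z; have {}C_to_z : {in C, forall j, arc j z}.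
  by move=> j /C_to_z; rewrite negbK.
case/andP: cC => /set0Pn [a0 a0C] /forall_inP C_succ.
have [a aC a_closest] := arg_minnP (fun i => cdiff z i) a0C.
pose U := [set w in C | arc a w].
have cU : cyclic U.
  rewrite /cyclic; apply/andP; split.
    by have /exists_inP [y yC ay] := C_succ a aC; apply/set0Pn; exists y; rewrite inE yC.
  apply/forall_inP => w; rewrite inE => /andP [wC aw].
  have /exists_inP [w' w'C ww'] := C_succ w wC; apply/exists_inP; exists w' => //.
  by rewrite inE w'C (arc_from_closest C_convex C_to_z aC a_closest wC w'C aw ww').
suff : #|U| < #|C| by rewrite ltnNge minC.
apply: proper_card; rewrite properE; apply/andP; split.
  by apply/subsetP => w; rewrite inE => /andP [].
by apply/subsetPn; exists a => //; rewrite inE arc_irr andbF.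
Qed.

Definition reversal_graph : rel (crown_elt n k) := fun u v =>
  match u, v with
  | inl x, inr y => ~~ @inc_ab n k x y
  | inr j, inl x => (x, j) \in S
  | _, _ => false
  end.

Lemma cyclic_of_reversal_cycle u v :
  reversal_graph u v -> connect reversal_graph v u -> exists C, cyclic C.
Proof.
move=> uv /connectP [p v_p u_last]; set c := v :: p.
have c_cycle : cycle reversal_graph c by rewrite /c /= rcons_path v_p -u_last.
have c_next w : w \in c -> reversal_graph w (next c w) := next_cycle c_cycle.
have arc_next j : inr j \in c -> exists2 y, inr y \in c & arc j y.
  move=> jc; have := c_next _ jc; have := mem_next c (inr j); rewrite jc.
  case: (next c (inr j)) => [x|//] xc xj; have := c_next _ xc; have := mem_next c (inl x).
  rewrite xc; case: (next c (inl x)) => [//|y] yc xy.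
  by exists y => //; apply/existsP; exists x; apply/andP.
have [j0 j0c] : exists j, inr j \in c.
  have [w wc] : exists w, w \in c by exists v; rewrite mem_head.
  case: w wc => [x xc|j]; last by exists j.
  have := c_next _ xc; have := mem_next c (inl x); rewrite xc.
  by case: (next c (inl x)) => [//|y] yc _; exists y.
exists [set j | inr j \in c]; apply/andP; split.
  by apply/set0Pn; exists j0; rewrite inE.
apply/forall_inP => j; rewrite inE => /arc_next [y yc jy].
by apply/exists_inP; exists y; rewrite ?inE.
Qed.

Lemma cyclic_of_not_reversible : ~ reversible S -> exists C, cyclic C.
Proof.
move=> nrev; case: (boolP [exists C, cyclic C]) => [/existsP //|/existsPn acyclic].
have graph_acyclic u v : reversal_graph u v -> ~~ connect reversal_graph v u.
  move=> uv; apply/negP => /(cyclic_of_reversal_cycle uv) [C cC].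
  by have := acyclic C; rewrite cC.
case: nrev; have [L [L_linear L_graph]] := acyclic_linear_order graph_acyclic.
exists L; split; last by case=> x j xj; apply: L_graph.
split=> // x y /orP [/eqP ->|]; first by case: L_linear.
by case: x y => [i|i] [j|j] //= ij; case/andP: (L_graph (inl i) (inr j) ij).
Qed.

Lemma ninc_cdiff x y j : cdiff x j <= k ->
  ~~ @inc_ab n k x y = (cdiff x j < cdiff y j < cdiff x j + n).
Proof.
move=> xj; rewrite /inc_ab; have := cdiff_add x y j.
by have := cdiff_lt x y; have := cdiff_lt y j; have := cdiff_lt x j; lia.
Qed.

Definition dist (j y : T) : T := Ordinal (cdiff_lt y j).

Lemma dist_inj j : injective (dist j).
Proof. by move=> y1 y2 /(congr1 val) /cdiff_injl. Qed.

Lemma dist_partner_bound j : {in dist j @: partners j, forall o : T, o + n <= n + k}.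
Proof.
by move=> o /imsetP [x]; rewrite inE => /partner_cdiff xj ->; rewrite /= addnC leq_add2l.
Qed.

Lemma dist_outs j : dist j @: outs j = sumset n (dist j @: partners j).
Proof.
apply/setP => d; rewrite inE; apply/imsetP/exists_inP.
  case=> y; rewrite inE => /existsP [x /andP [xj xy]] ->.
  by exists (dist j x); rewrite ?imset_f ?inE //= -ninc_cdiff ?partner_cdiff.
case=> o /imsetP [x]; rewrite inE => xj -> /= xd.
have [y yd] := cdiff_surj j d; exists y; last exact: val_inj.
by rewrite inE; apply/existsP; exists x; rewrite xj (ninc_cdiff _ (partner_cdiff xj)) yd.
Qed.

Hypothesis n_gt1 : 1 < n.

Lemma card_outs_ge j : j \in supp -> #|partners j| + (n - 2) <= #|outs j|.
Proof.
rewrite inE => nonempty.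
rewrite -(card_imset (partners j) (@dist_inj j)) -(card_imset (outs j) (@dist_inj j)).
rewrite dist_outs card_sumset // ?imset_eq0 //; exact: dist_partner_bound.
Qed.

Lemma card_outs_ge_nonconvex j : ~~ convex j -> #|partners j| + 2 * (n - 2) <= #|outs j|.
Proof.
case/forallPn => u /forallPn [v /forallPn [w]].
rewrite negb_imply => /andP [ju]; rewrite negb_imply => /andP [jw].
rewrite negb_imply => /andP [uvw njv].
rewrite -(card_imset (partners j) (@dist_inj j)) -(card_imset (outs j) (@dist_inj j)).
rewrite dist_outs.
apply: (card_sumset_gap n_gt1 (d1 := dist j u) (d2 := dist j v) (d3 := dist j w)) => //.
  exact: dist_partner_bound.
all: by rewrite -dist_outs mem_imset ?inE //; apply: dist_inj.
Qed.

Lemma card_S_partners : #|S| = \sum_(j in supp) #|partners j|.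
Proof.
rewrite card_sum_mem (eq_bigr (fun p => nat_of_bool ((p.1, p.2) \in S))); last by case.
rewrite -(pair_bigA _ (fun x j => nat_of_bool ((x, j) \in S))) exchange_big /=.
rewrite [RHS]big_mkcond; apply: eq_bigr => j _; rewrite card_sum_mem.
case: ifP => [_|]; first by apply: eq_bigr => x _; rewrite inE.
rewrite inE => /negbFE/eqP partners0; rewrite big1 // => x _.
have : x \notin partners j by rewrite partners0 inE.
by rewrite inE => /negbTE ->.
Qed.

Lemma sum_outs_ge : #|S| + (n - 2) * #|supp| <= \sum_(j in supp) #|outs j|.
Proof.
rewrite card_S_partners mulnC -sum_nat_const -big_split /=.
by apply: leq_sum => j; apply: card_outs_ge.
Qed.

Lemma sum_outs_ge_nonconvex j0 : j0 \in supp -> ~~ convex j0 ->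
  #|S| + (n - 2) * #|supp| + (n - 2) <= \sum_(j in supp) #|outs j|.
Proof.
move=> j0_supp nconv; rewrite card_S_partners mulnC -sum_nat_const -big_split /=.
rewrite (bigD1 j0) // [X in _ <= X](bigD1 j0) //=.
rewrite addnAC -(addnA #|partners j0|) addnn -mul2n.
apply: leq_add; first exact: card_outs_ge_nonconvex.
by apply: leq_sum => j /andP [/card_outs_ge].
Qed.

Lemma sum_outs_le c : (forall y, y \notin supp -> \sum_(j in supp) arc j y <= c) ->
  2 * \sum_(j in supp) #|outs j| <= #|supp| * (#|supp| - 1) + 2 * (#|~: supp| * c).
Proof.
move=> inarcs_le.
have outs_split j : #|outs j| = \sum_(y in supp) arc j y + \sum_(y in ~: supp) arc j y.
  rewrite card_sum_mem (bigID (mem supp)) /=.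
  by congr (_ + _); apply: eq_big => y; rewrite ?inE.
rewrite (eq_bigr _ (fun j _ => outs_split j)) big_split mulnDr /=.
apply: leq_add; first exact: sum_asym_le arc_irr arc_asym.
rewrite leq_mul2l exchange_big /= -sum_nat_const.
by apply: leq_sum => y; rewrite inE; apply: inarcs_le.
Qed.

End CrownArcs.

Theorem theorem1p6 (n k : nat) (S : {set 'I_(n + k) * 'I_(n + k)}) :
  3 <= n -> n <= k ->
  independent S -> ~ reversible S ->
  #|S| <= (k.+1 * k.+2) %/ 2 + 2 - n.
Proof.
(* The argument does not use [n <= k]. *)
move=> n_ge3 _ [S_inc S_indep] nrev; have n_gt1 : 1 < n by apply: ltnW.
have [C0 cC0] := cyclic_of_not_reversible nrev.
have [C cC minC] := arg_minnP (fun C : {set 'I_(n + k)} => #|C|) cC0.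
have supp_cardC : #|supp S| + #|~: supp S| = n + k by rewrite cardsC card_ord.
apply: leq_half_triangular.
have [/forall_inP C_convex | /forall_inPn [j0 j0C nconv]] :=
  boolP [forall j in C, convex S j].
  apply: (double_bound_convex supp_cardC).
    case/andP: (cC) => /set0Pn [j jC] _; rewrite card_gt0; apply/set0Pn; exists j.
    exact: subsetP (cyclic_sub_supp cC) j jC.
  apply: leq_trans (leq_mul (leqnn 2) (sum_outs_ge S_inc n_gt1)) _.
  apply: (sum_outs_le S_inc S_indep) => y _.
  have [j jC njy] := minimal_cyclic_misses S_inc S_indep y cC minC C_convex.
  exact: sum_bool_le_cardD1 (subsetP (cyclic_sub_supp cC) j jC) njy.
apply: (double_bound_nonconvex supp_cardC).
have j0_supp := subsetP (cyclic_sub_supp cC) j0 j0C.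
apply: leq_trans (leq_mul (leqnn 2) (sum_outs_ge_nonconvex S_inc n_gt1 j0_supp nconv)) _.
by apply: (sum_outs_le S_inc S_indep) => y _; apply: sum_bool_le_card.
Qed.
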